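(* For $\beta=(\beta_1,\beta_2)$, $\beta'=(\beta_1',\beta_2')$ with $\beta_1>\beta_2$, $\beta_1'>\beta_2'$, let $\varphi_\beta:\mathbb{R}^2\to\mathbb{R}^2$, $\varphi_\beta(S_1,S_2)=(\beta_1S_1+\beta_2S_2,\,1-S_1-S_2)$, and $g=g(\beta',\beta):=\varphi_{\beta'}^{-1}\circ\varphi_\beta$. Let $T_{ph}:=\{(S_1,S_2)\in\mathbb{R}_{\ge0}^2: S_1+S_2\le 1\}$. Then $g(T_{ph})\subset T_{ph}$ if and only if $\beta_2'\le\beta_2$ and $\beta_1\le\beta_1'$. *)

From Stdlib Require Import Reals Lra.
Open Scope R_scope.

Definition phi (b : R * R) (S : R * R) : R * R :=
  (fst b * fst S + snd b * snd S, 1 - fst S - snd S).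

Definition phi_inv (b : R * R) (P : R * R) : R * R :=
  ((fst P - snd b * (1 - snd P)) / (fst b - snd b),
   (fst b * (1 - snd P) - fst P) / (fst b - snd b)).

Definition g (b' b : R * R) (S : R * R) : R * R := phi_inv b' (phi b S).

Definition Tph (S : R * R) : Prop :=
  0 <= fst S /\ 0 <= snd S /\ fst S + snd S <= 1.

Lemma phi_inv_phi (b S : R * R) : fst b <> snd b -> phi_inv b (phi b S) = S.
Proof.
  destruct b as [b1 b2], S as [s1 s2]; simpl; intro H.
  assert (b1 - b2 <> 0) by lra.
  unfold phi_inv, phi; simpl; f_equal; field; auto.
Qed.

Lemma phi_phi_inv (b P : R * R) : fst b <> snd b -> phi b (phi_inv b P) = P.
Proof.
  destruct b as [b1 b2], P as [u v]; simpl; intro H.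
  assert (b1 - b2 <> 0) by lra.
  unfold phi_inv, phi; simpl; f_equal; field; auto.
Qed.

(* g(beta', beta) is the linear map whose columns are the images of the vertices
   (1,0) and (0,1); both columns sum to 1 because the second coordinate of phi
   only sees S1 + S2.  A linear map with unit column sums preserves the triangle
   exactly when its entries are nonnegative, i.e. when it sends the two vertices
   into the triangle; for g these entries are (b1 - b2'), (b2 - b2'), (b1' - b1),
   (b1' - b2) divided by b1' - b2' > 0, and b1 > b2, b1' > b2' leave only the
   conditions b2' <= b2 and b1 <= b1'. *)
From Stdlib Require Import Reals Lra.
Open Scope R_scope.

Definition lin2 (a b c d : R) (S : R * R) : R * R :=
  (a * fst S + b * snd S, c * fst S + d * snd S).

Lemma Tph_lin2_iff (a b c d : R) :
  a + c = 1 -> b + d = 1 ->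
  (forall S : R * R, Tph S -> Tph (lin2 a b c d S)) <->
  (0 <= a /\ 0 <= b /\ 0 <= c /\ 0 <= d).
Proof.
  unfold Tph, lin2; simpl; intros Hac Hbd; split.
  - intros Hpres.
    destruct (Hpres (1, 0)) as [Ha [Hc _]]; [simpl; lra |].
    destruct (Hpres (0, 1)) as [Hb [Hd _]]; [simpl; lra |].
    simpl in *; lra.
  - intros (Ha & Hb & Hc & Hd) [s1 s2]; simpl; intros (Hs1 & Hs2 & Hsum).
    assert (Hcols : a * s1 + b * s2 + (c * s1 + d * s2) = s1 + s2).
    { replace c with (1 - a) by lra; replace d with (1 - b) by lra; ring. }
    repeat split; nra.
Qed.

Lemma Rdiv_nonneg_iff (x d : R) : 0 < d -> 0 <= x / d <-> 0 <= x.
Proof.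
  intros Hd; split; intros Hx.
  - replace x with (x / d * d) by (field; lra); nra.
  - apply Rle_mult_inv_pos; assumption.
Qed.

Lemma g_lin2 (b1 b2 b1' b2' : R) (S : R * R) :
  g (b1', b2') (b1, b2) S =
  lin2 ((b1 - b2') / (b1' - b2')) ((b2 - b2') / (b1' - b2'))
       ((b1' - b1) / (b1' - b2')) ((b1' - b2) / (b1' - b2')) S.
Proof.
  destruct S as [s1 s2]; unfold g, phi, phi_inv, lin2, Rdiv; simpl; f_equal; ring.
Qed.

Theorem lemma3p12 (b1 b2 b1' b2' : R) :
  b1 > b2 -> b1' > b2' ->
  ((forall S : R * R, Tph S -> Tph (g (b1', b2') (b1, b2) S)) <->
   (b2' <= b2 /\ b1 <= b1')).
Proof.
  intros Hb Hb'.
  assert (Hden : 0 < b1' - b2') by lra.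
  assert (Hcol : forall x y, x + y = b1' - b2' ->
                   x / (b1' - b2') + y / (b1' - b2') = 1)
    by (intros x y Hxy; rewrite <- Rdiv_plus_distr, Hxy; field; lra).
  transitivity (0 <= (b1 - b2') / (b1' - b2') /\ 0 <= (b2 - b2') / (b1' - b2') /\
                0 <= (b1' - b1) / (b1' - b2') /\ 0 <= (b1' - b2) / (b1' - b2')).
  - rewrite <- Tph_lin2_iff by (apply Hcol; ring).
    split; intros Hpres S HS; [rewrite <- g_lin2 | rewrite g_lin2]; auto.
  - rewrite !Rdiv_nonneg_iff by exact Hden; lra.
Qed.
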